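(* Let $q=2$. Let $f=\phi(F)$ be a symplectic basis function with $F$ of class $(\rho,\sigma,\tau,\upsilon)\neq(1,0,m-2,0)$ and $\rho>0$. Then there exists $g\in \mathbf F_2\operatorname{Sp}(V)$ such that $gf$ is a function of class $(\rho-1,\sigma,\tau+2,\upsilon)$.
   Context: $k=\mathbf F_2$. $V$ is a $2m$-dimensional $k$-space with nondegenerate alternating form and symplectic basis with coordinate functions $x_1,\dots,x_m,y_m,\dots,y_1$; $\operatorname{Sp}(V)$ acts on functions $V\to k$ by linear substitution (note $x_i^2=x_i$ as functions), extended linearly to the group ring. In $k[X_1,\dots,X_m,Y_1,\dots,Y_m]$ put $W_i=X_iY_i$ and let $Z_i$ denote $X_i$ or $Y_i$. A square-free homogeneous polynomial $F$ is of class $(\rho,\sigma,\tau,\upsilon)$ if there is a partition of $\{1,\dots,m\}$ into $R=\{r_1,\dots,r_\rho\}$, $R'=\{r'_1,\dots,r'_\rho\}$, $S,T,U$ with $|S|=\sigma,|T|=\tau,|U|=\upsilon$ and $F=\prod_{i=1}^\rho(W_{r_i}+W_{r'_i})\prod_{i\in S}W_i\prod_{i\in T}Z_i$; a function is of that class if it equals $\phi(F')$ for some $F'$ of that class, where $\phi$ is evaluation $X_i\mapsto x_i,Y_i\mapsto y_i$. $P^\lambda_\ell$ is the set of such polynomials with $2\rho+2\sigma+\tau=\lambda$ and $\sigma\leq\ell$; choose $B^\lambda_0\subseteq P^\lambda_0$ maximal linearly independent and inductively $B^\lambda_\ell=B^\lambda_{\ell-1}\cup P'^\lambda_\ell$ ($P'^\lambda_\ell\subseteq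 P^\lambda_\ell$) a basis of the span of $P^\lambda_\ell$. For $q=2$ a symplectic basis function is $\phi(F)$ with $F\in B^\lambda_{\lfloor\lambda/2\rfloor}$, $1\le\lambda\le 2m-1$. *)

From HB Require Import structures.
From mathcomp Require Import all_boot all_order all_algebra.
Set Implicit Arguments. Unset Strict Implicit. Unset Printing Implicit Defensive.
Import GRing.Theory.
Local Open Scope ring_scope.

(* k = F_2, V = k^(2m) as row vectors; coordinate order
   x_1, ..., x_m, y_m, ..., y_1  (indices 0..m-1 for x_i, and y_i at 2m-1-i). *)
Definition Vsp (m : nat) := 'rV['F_2]_(m + m).

Definition Fn (m : nat) := {ffun Vsp m -> 'F_2}.

Definition xco (m : nat) (i : 'I_m) (v : Vsp m) : 'F_2 := v ord0 (lshift m i).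
Definition yco (m : nat) (i : 'I_m) (v : Vsp m) : 'F_2 := v ord0 (rshift m (rev_ord i)).

(* Gram matrix of the alternating form in the symplectic basis e_1..e_m,f_m..f_1 *)
Definition Jform (m : nat) : 'M['F_2]_(m + m) :=
  \matrix_(i, j) ((i + j == (m + m).-1)%N)%:R.

(* Sp(V), acting on row vectors by v |-> v *m g *)
Definition symplectic (m : nat) (g : 'M['F_2]_(m + m)) : bool :=
  g *m Jform m *m g^T == Jform m.

(* action of an element  a = sum_g a(g) g  of the group ring F_2 Sp(V)
   on a function f by linear substitution:  (g f)(v) = f(v g). *)
Definition in_group_ring (m : nat) (a : 'M['F_2]_(m + m) -> 'F_2) : Prop :=
  forall g, a g != 0 -> symplectic g.

Definition gr_act (m : nat) (a : 'M['F_2]_(m + m) -> 'F_2) (f : Fn m) : Fn m :=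
  [ffun v => \sum_(g : 'M['F_2]_(m + m)) a g * f (v *m g)].

(* phi(F) for the polynomial
   F = prod_i (W_{r_i} + W_{r'_i}) * prod_{i in S} W_i * prod_{i in T} Z_i,
   where Z_i = Y_i if z i, and Z_i = X_i otherwise. *)
Definition class_fun (m rho : nat) (r r' : 'I_rho -> 'I_m) (S T : {set 'I_m})
    (z : 'I_m -> bool) : Fn m :=
  [ffun v =>
     (\prod_(i < rho) (xco (r i) v * yco (r i) v + xco (r' i) v * yco (r' i) v))
   * (\prod_(i in S) (xco i v * yco i v))
   * (\prod_(i in T) (if z i then yco i v else xco i v))].

Definition of_class (m rho sigma tau upsilon : nat) (f : Fn m) : Prop :=
  exists (r r' : 'I_rho -> 'I_m) (S T U : {set 'I_m}) (z : 'I_m -> bool),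
    let R := [set r i | i in 'I_rho] in
    let R' := [set r' i | i in 'I_rho] in
    [/\ #|R| = rho, #|R'| = rho, #|S| = sigma, #|T| = tau & #|U| = upsilon]
    /\ [/\ [disjoint R & R'], [disjoint R & S :|: T :|: U],
           [disjoint R' & S :|: T :|: U] & [disjoint S & T]]
    /\ [disjoint S & U] /\ [disjoint T & U]
    /\ R :|: R' :|: S :|: T :|: U = [set: 'I_m]
    /\ f = class_fun r r' S T z.

Definition Pset (m lam ell : nat) (f : Fn m) : Prop :=
  exists rho sigma tau upsilon,
    (2 * rho + 2 * sigma + tau = lam)%N /\ (sigma <= ell)%N
    /\ of_class rho sigma tau upsilon f.

Definition lcomb (m : nat) (s : seq (Fn m)) (c : Fn m -> 'F_2) : Fn m :=
  [ffun v => \sum_(b <- s) c b * b v].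

Definition lin_indep (m : nat) (B : {set Fn m}) : Prop :=
  forall c : Fn m -> 'F_2, lcomb (enum B) c = [ffun _ => 0] ->
    forall b, b \in B -> c b = 0.

Definition in_span (m : nat) (P : Fn m -> Prop) (f : Fn m) : Prop :=
  exists (s : seq (Fn m)) (c : Fn m -> 'F_2),
    (forall b, b \in s -> P b) /\ f = lcomb s c.

Definition basis_of_span (m : nat) (B : {set Fn m}) (P : Fn m -> Prop) : Prop :=
  lin_indep B /\ (forall f, in_span (fun b => b \in B) f <-> in_span P f).

Definition valid_B (m : nat) (Bf : nat -> nat -> {set Fn m}) : Prop :=
  forall lam, (1 <= lam <= (m + m).-1)%N ->
    [/\
        (forall b, b \in Bf lam 0%N -> Pset lam 0 b),
        lin_indep (Bf lam 0%N),
        (forall B' : {set Fn m}, Bf lam 0%N \proper B' ->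
            (forall b, b \in B' -> Pset lam 0 b) -> ~ lin_indep B')
      & forall ell, (1 <= ell <= lam./2)%N ->
          exists P' : {set Fn m},
            (forall b, b \in P' -> Pset lam ell b)
            /\ Bf lam ell = Bf lam ell.-1 :|: P'
            /\ basis_of_span (Bf lam ell) (Pset lam ell)].

Definition symp_basis_fun (m : nat) (Bf : nat -> nat -> {set Fn m}) (f : Fn m) : Prop :=
  exists lam, (1 <= lam <= (m + m).-1)%N /\ f \in Bf lam lam./2.

From HB Require Import structures.
From mathcomp Require Import all_boot all_order all_algebra zify.
From Stdlib Require Import FunctionalExtensionality.
Set Implicit Arguments. Unset Strict Implicit. Unset Printing Implicit Defensive.
Import GRing.Theory.
Local Open Scope ring_scope.

(* Write F = (W_a + W_b) * G, with (a, b) the first pair of R x R'.  Since the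
   five index sets partition {1..m}, the excluded class is the only one with
   U, S empty and rho = 1; otherwise one of the following holds:
   - c in U:         W_a + W_b          becomes  X_a X_c          (b joins U);
   - c in S:         (W_a + W_b) W_c    becomes  W_a X_b X_c;
   - (c, d) in R x R': (W_a + W_b)(W_c + W_d) becomes X_a X_b (W_c + W_d).
   Each replacement is realized by an explicit sum of products of symplectic
   transvections t_u : v |-> v + <v, u> u whose vectors u lie in the span of
   the 3 or 4 hyperbolic planes involved.  Such transvections fix every other
   coordinate, so the remaining factor is untouched and the claim reduces to
   an identity of functions on F_2^6 or F_2^8, checked by evaluation. *)

Lemma F2_cases (x : 'F_2) : x = 0 \/ x = 1.
Proof. by case: x => [[|[|n]] //= lt_x]; [left|right]; apply: val_inj. Qed.

Lemma F2_addxx (x : 'F_2) : x + x = 0.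
Proof. exact: (addrr_pchar2 (pchar_Fp (isT : prime 2))). Qed.

Lemma mx_addxx (p q : nat) (A : 'M['F_2]_(p, q)) : A + A = 0.
Proof. by apply/matrixP => i j; rewrite !mxE F2_addxx. Qed.

Section Transvections.
Variable m : nat.

Definition sform (v u : Vsp m) : 'F_2 :=
  \sum_i (xco i v * yco i u + yco i v * xco i u).

Lemma Jform_rev (i j : 'I_(m + m)) : Jform m i j = (i == rev_ord j)%:R.
Proof.
rewrite mxE; congr (_%:R).
have lt_j := ltn_ord j; rewrite -(inj_eq val_inj) /=.
by do 2 case: eqP; lia.
Qed.

Lemma mulmx_Jform (v : Vsp m) (k : 'I_(m + m)) : (v *m Jform m) 0 k = v 0 (rev_ord k).
Proof.
rewrite mxE (bigD1 (rev_ord k)) //= Jform_rev eqxx mulr1 big1 ?addr0 // => i /negbTE ne_ik.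
by rewrite Jform_rev ne_ik mulr0.
Qed.

Lemma rev_lshift (i : 'I_m) : rev_ord (lshift m i) = rshift m (rev_ord i).
Proof. by apply: val_inj => /=; have := ltn_ord i; lia. Qed.

Lemma rev_rshift (i : 'I_m) : rev_ord (rshift m i) = lshift m (rev_ord i).
Proof. by apply: val_inj => /=; have := ltn_ord i; lia. Qed.

Lemma sform_mx (v u : Vsp m) : (v *m Jform m *m u^T) 0 0 = sform v u.
Proof.
rewrite mxE; under eq_bigr do rewrite mulmx_Jform mxE.
rewrite big_split_ord /= addrC.
under eq_bigr do rewrite rev_rshift.
rewrite (reindex_inj rev_ord_inj) /sform -big_split /=; apply: eq_bigr => i _.
by rewrite rev_lshift /xco /yco rev_ordK mulrC.
Qed.

Lemma sform_xx (u : Vsp m) : sform u u = 0.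
Proof. by rewrite /sform big1 // => i _; rewrite mulrC F2_addxx. Qed.

Definition transvection (u : Vsp m) : 'M['F_2]_(m + m) := 1%:M + (Jform m *m u^T) *m u.

Lemma transvectionE (v u : Vsp m) : v *m transvection u = v + sform v u *: u.
Proof.
rewrite /transvection mulmxDr mulmx1 !mulmxA; congr (_ + _).
by rewrite [v *m _ *m _]mx11_scalar sform_mx mul_scalar_mx.
Qed.

Lemma Jform_tr : (Jform m)^T = Jform m.
Proof. by apply/matrixP => i j; rewrite !mxE addnC. Qed.

Lemma transvection_symplectic (u : Vsp m) : symplectic (transvection u).
Proof.
apply/eqP; rewrite /transvection linearD /= trmx1 !trmx_mul trmxK Jform_tr.
set J := Jform m.
have uJu : u *m J *m u^T = 0.
  by rewrite [LHS]mx11_scalar sform_mx sform_xx; apply/matrixP => i j; rewrite !mxE mul0rn.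
rewrite !mulmxDl mul1mx !mulmxDr !mulmx1.
have -> : J *m u^T *m u *m J *m (u^T *m (u *m J)) = J *m u^T *m (u *m J *m u^T) *m (u *m J).
  by rewrite !mulmxA.
rewrite uJu mulmx0 mul0mx addr0 -!mulmxA.
by rewrite -addrA mx_addxx addr0.
Qed.

Lemma symplectic_mul (g h : 'M['F_2]_(m + m)) :
  symplectic g -> symplectic h -> symplectic (g *m h).
Proof.
move=> /eqP gJ /eqP hJ; apply/eqP.
by rewrite trmx_mul -!mulmxA [X in g *m X]mulmxA [X in g *m X]mulmxA hJ mulmxA gJ.
Qed.

Lemma symplectic1 : symplectic (1%:M : 'M['F_2]_(m + m)).
Proof. by apply/eqP; rewrite trmx1 mul1mx mulmx1. Qed.

End Transvections.

(* Computable finite sums: the local identities below are checked by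
   evaluation, which the (locked) big operators do not allow. *)
Fixpoint sum_upto (k : nat) (F : nat -> 'F_2) : 'F_2 :=
  if k is k'.+1 then sum_upto k' F + F k' else 0.

Lemma sum_uptoE k F : sum_upto k F = \sum_(0 <= j < k) F j.
Proof.
elim: k => [|k IH] /=; first by rewrite big_geq.
by rewrite big_nat_recr //= IH.
Qed.

Fixpoint sum_list (T : Type) (s : seq T) (F : T -> 'F_2) : 'F_2 :=
  if s is t :: s' then F t + sum_list s' F else 0.

Lemma sum_listE (T : Type) (s : seq T) F : sum_list s F = \sum_(t <- s) F t.
Proof. by elim: s => [|t s IH] /=; rewrite ?big_nil ?big_cons ?IH. Qed.

(* Local model of a window of k hyperbolic planes: a point is given by its
   x- and y-coordinates (indexed by nat), a transvection by the coordinates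
   (ux, uy) of its vector, and a word is a sequence of transvections. *)
Definition lstate := ((nat -> 'F_2) * (nat -> 'F_2))%type.
Definition lvec := (seq 'F_2 * seq 'F_2)%type.

Definition local_transvection (k : nat) (u : lvec) (s : lstate) : lstate :=
  let w := sum_upto k (fun j => s.1 j * nth 0 u.2 j + s.2 j * nth 0 u.1 j) in
  (fun j => s.1 j + w * nth 0 u.1 j, fun j => s.2 j + w * nth 0 u.2 j).

Definition local_word (k : nat) (w : seq lvec) (s : lstate) : lstate :=
  foldl (fun s u => local_transvection k u s) s w.

Lemma xco_addZ m (i : 'I_m) (v u : Vsp m) c : xco i (v + c *: u) = xco i v + c * xco i u.
Proof. by rewrite /xco !mxE. Qed.

Lemma yco_addZ m (i : 'I_m) (v u : Vsp m) c : yco i (v + c *: u) = yco i v + c * yco i u.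
Proof. by rewrite /yco !mxE. Qed.

Definition coord_vec m (ux uy : 'I_m -> 'F_2) : Vsp m :=
  \row_k (match split k with inl i => ux i | inr j => uy (rev_ord j) end).

Lemma xco_coord_vec m ux uy (i : 'I_m) : xco i (coord_vec ux uy) = ux i.
Proof. by rewrite /xco mxE (unsplitK (inl _ i)). Qed.

Lemma yco_coord_vec m ux uy (i : 'I_m) : yco i (coord_vec ux uy) = uy i.
Proof. by rewrite /yco mxE (unsplitK (inr _ (rev_ord i))) rev_ordK. Qed.

Definition realizes (k : nat) (ws : seq (seq lvec)) (L L' : lstate -> 'F_2) :=
  forall xs ys : seq 'F_2, size xs = k -> size ys = k ->
    sum_list ws (fun w => L (local_word k w (nth 0 xs, nth 0 ys))) = L' (nth 0 xs, nth 0 ys).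

(* The window is the duplicate-free list pl of indices of hyperbolic planes;
   a0 is an arbitrary index, used only as a default value for nth. *)
Section Window.
Variables (m : nat) (pl : seq 'I_m) (a0 : 'I_m).
Hypothesis pl_uniq : uniq pl.

Definition window (v : Vsp m) : lstate :=
  (nth 0 [seq xco i v | i <- pl], nth 0 [seq yco i v | i <- pl]).

Definition window_vec (u : lvec) : Vsp m :=
  coord_vec (fun i => nth 0 u.1 (index i pl)) (fun i => nth 0 u.2 (index i pl)).

Definition fits (u : lvec) := (size u.1 <= size pl)%N && (size u.2 <= size pl)%N.

Definition agree_off (v w : Vsp m) :=
  forall i, i \notin pl -> xco i w = xco i v /\ yco i w = yco i v.

Lemma window_vec_off u i : fits u -> i \notin pl ->
  xco i (window_vec u) = 0 /\ yco i (window_vec u) = 0.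
Proof.
move=> /andP[fit1 fit2] i_pl; rewrite /window_vec xco_coord_vec yco_coord_vec memNindex //.
by rewrite !nth_default.
Qed.

Lemma sform_window_vec v u : fits u ->
  sform v (window_vec u) =
  sum_upto (size pl) (fun j => (window v).1 j * nth 0 u.2 j + (window v).2 j * nth 0 u.1 j).
Proof.
move=> fit_u; rewrite sum_uptoE /sform (bigID (mem pl)) /= [X in _ + X]big1 ?addr0; last first.
  by move=> i /(window_vec_off fit_u) [-> ->]; rewrite !mulr0 addr0.
rewrite -big_uniq //= (big_nth a0); apply: eq_big_nat => j /andP[_ lt_j].
by rewrite /window_vec xco_coord_vec yco_coord_vec index_uniq // !(nth_map a0).
Qed.

Lemma window_transvection v u : fits u ->
  window (v *m transvection (window_vec u)) = local_transvection (size pl) u (window v).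
Proof.
move=> fit_u; have /andP[fit1 fit2] := fit_u.
rewrite transvectionE /local_transvection -sform_window_vec //.
congr pair; apply: functional_extensionality => j /=.
- have [lt_j|ge_j] := ltnP j (size pl).
    by rewrite !(nth_map a0) // xco_addZ /window_vec xco_coord_vec index_uniq.
  by rewrite !nth_default ?size_map ?mulr0 ?addr0 // (leq_trans fit1).
- have [lt_j|ge_j] := ltnP j (size pl).
    by rewrite !(nth_map a0) // yco_addZ /window_vec yco_coord_vec index_uniq.
  by rewrite !nth_default ?size_map ?mulr0 ?addr0 // (leq_trans fit2).
Qed.

Lemma agree_off_transvection v u : fits u -> agree_off v (v *m transvection (window_vec u)).
Proof.
move=> fit_u i i_pl; have [x0 y0] := window_vec_off fit_u i_pl.
by rewrite transvectionE xco_addZ yco_addZ x0 y0 !mulr0 !addr0.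
Qed.

Definition word_mx (w : seq lvec) : 'M['F_2]_(m + m) :=
  foldr (fun u g => transvection (window_vec u) *m g) 1%:M w.

Lemma word_mx_symplectic w : symplectic (word_mx w).
Proof.
elim: w => [|u w IH] /=; first exact: symplectic1.
exact: symplectic_mul (transvection_symplectic _) IH.
Qed.

Lemma window_word w v : all fits w ->
  window (v *m word_mx w) = local_word (size pl) w (window v) /\ agree_off v (v *m word_mx w).
Proof.
elim: w v => [|u w IH] v /=; first by rewrite mulmx1.
move=> /andP[fit_u fit_w]; rewrite mulmxA.
have [-> agree_w] := IH (v *m transvection (window_vec u)) fit_w.
rewrite window_transvection //; split => // i i_pl.
have [-> ->] := agree_w i i_pl; exact: agree_off_transvection.
Qed.

Definition word_sum (ws : seq (seq lvec)) (g : 'M['F_2]_(m + m)) : 'F_2 :=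
  \sum_(w <- ws) (g == word_mx w)%:R.

Lemma word_sum_group_ring ws : in_group_ring (word_sum ws).
Proof.
move=> g; rewrite /word_sum.
have [/hasP[w _ /eqP ->] _|] := boolP (has (fun w => g == word_mx w) ws).
  exact: word_mx_symplectic.
by move/hasPn => not_word; rewrite big1_seq ?eqxx // => w /not_word /negbTE ->.
Qed.

Lemma local_replacement (ws : seq (seq lvec)) (f h : Fn m) (L L' : lstate -> 'F_2)
    (rest : Vsp m -> 'F_2) :
  all (all fits) ws -> realizes (size pl) ws L L' ->
  (forall v, f v = L (window v) * rest v) ->
  (forall v, h v = L' (window v) * rest v) ->
  (forall v w, agree_off v w -> rest w = rest v) ->
  exists a, in_group_ring a /\ gr_act a f = h.
Proof.
move=> fit_ws local_id fE hE rest_off; exists (word_sum ws); split.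
  exact: word_sum_group_ring.
apply/ffunP => v; rewrite ffunE /word_sum.
under eq_bigr do rewrite mulr_suml.
rewrite exchange_big /=.
have word_term w : w \in ws ->
    \sum_(g : 'M['F_2]_(m + m)) (g == word_mx w)%:R * f (v *m g)
    = L (local_word (size pl) w (window v)) * rest v.
  move=> w_ws; rewrite (bigD1 (word_mx w)) //= eqxx mul1r big1 ?addr0; last first.
    by move=> g /negbTE ->; rewrite mul0r.
  have [win_w agree_w] := window_word v (allP fit_ws w w_ws).
  by rewrite fE win_w (rest_off _ _ agree_w).
rewrite (eq_big_seq _ word_term) -mulr_suml -sum_listE hE.
by congr (_ * _); rewrite /window local_id ?size_map.
Qed.

End Window.

Section ClassFunctions.
Variables (m p : nat) (S T : {set 'I_m}) (z : 'I_m -> bool).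

Lemma class_fun_pair (r r' : 'I_p.+1 -> 'I_m) v :
  class_fun r r' S T z v =
  (xco (r ord0) v * yco (r ord0) v + xco (r' ord0) v * yco (r' ord0) v)
  * class_fun (r \o lift ord0) (r' \o lift ord0) S T z v.
Proof. by rewrite !ffunE big_ord_recl -!mulrA. Qed.

Variables (r r' : 'I_p -> 'I_m).

Lemma class_fun_setU1S c v : c \notin S ->
  class_fun r r' (c |: S) T z v = xco c v * yco c v * class_fun r r' S T z v.
Proof. by move=> c_S; rewrite !ffunE big_setU1 //= mulrCA !mulrA. Qed.

Lemma class_fun_setU1T c v : c \notin T -> z c = false ->
  class_fun r r' S (c |: T) z v = xco c v * class_fun r r' S T z v.
Proof. by move=> c_T zc; rewrite !ffunE big_setU1 //= zc mulrCA. Qed.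

Lemma class_fun_eq_z (z' : 'I_m -> bool) : {in T, z =1 z'} ->
  class_fun r r' S T z = class_fun r r' S T z'.
Proof.
by move=> zz'; apply/ffunP => v; rewrite !ffunE; congr (_ * _); apply: eq_bigr => i /zz' ->.
Qed.

Lemma class_fun_agree_off (pl : seq 'I_m) v w :
  agree_off pl v w ->
  (forall i, r i \notin pl) -> (forall i, r' i \notin pl) ->
  {in S, forall i, i \notin pl} -> {in T, forall i, i \notin pl} ->
  class_fun r r' S T z w = class_fun r r' S T z v.
Proof.
move=> agree r_pl r'_pl S_pl T_pl; rewrite !ffunE.
congr (_ * _ * _); apply: eq_bigr => i i_in.
- by have [-> ->] := agree _ (r_pl i); have [-> ->] := agree _ (r'_pl i).
- by have [-> ->] := agree _ (S_pl i i_in).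
- by have [-> ->] := agree _ (T_pl i i_in).
Qed.

End ClassFunctions.

Definition partition5 m (R R' S T U : {set 'I_m}) :=
  forall x, ((x \in R) + (x \in R') + (x \in S) + (x \in T) + (x \in U) = 1)%N.

Lemma injective_of_card_imset m k (r : 'I_k -> 'I_m) :
  #|[set r i | i in 'I_k]| = k -> injective r.
Proof.
move=> card_r i j; have /imset_injP r_inj : #|[set r i | i in 'I_k]| == #|'I_k|.
  by rewrite card_r card_ord.
exact: r_inj.
Qed.

Lemma of_class_elim m rho sigma tau upsilon (f : Fn m) :
  of_class rho sigma tau upsilon f ->
  exists (r r' : 'I_rho -> 'I_m) (S T U : {set 'I_m}) (z : 'I_m -> bool),
    [/\ injective r, injective r', #|S| = sigma, #|T| = tau & #|U| = upsilon] /\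
    partition5 [set r i | i in 'I_rho] [set r' i | i in 'I_rho] S T U /\
    f = class_fun r r' S T z.
Proof.
case=> r [r' [S [T [U [z]]]]] /= [[cR cR' cS cT cU] [[d1 d2 d3 d4] [d5 [d6 [cov ->]]]]].
exists r, r', S, T, U, z; split; last split => //.
  by split => //; apply: injective_of_card_imset.
set R := [set r i | i in 'I_rho] in d1 d2 d3 cov *.
set R' := [set r' i | i in 'I_rho] in d1 d2 d3 cov *.
move=> x; have := in_setT x; rewrite -cov !inE.
have h1 : (x \in R) ==> (x \notin R') by apply/implyP => /(disjointFr d1) ->.
have h2 : (x \in R) ==> ~~ [|| x \in S, x \in T | x \in U].
  by apply/implyP => /(disjointFr d2); rewrite !inE -orbA => ->.
have h3 : (x \in R') ==> ~~ [|| x \in S, x \in T | x \in U].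
  by apply/implyP => /(disjointFr d3); rewrite !inE -orbA => ->.
have h4 : (x \in S) ==> (x \notin T) by apply/implyP => /(disjointFr d4) ->.
have h5 : (x \in S) ==> (x \notin U) by apply/implyP => /(disjointFr d5) ->.
have h6 : (x \in T) ==> (x \notin U) by apply/implyP => /(disjointFr d6) ->.
move: h1 h2 h3 h4 h5 h6.
by case: (x \in R); case: (x \in R'); case: (x \in S); case: (x \in T); case: (x \in U).
Qed.

Lemma disjoint_of m (A B : {set 'I_m}) :
  (forall x, ~~ ((x \in A) && (x \in B))) -> [disjoint A & B].
Proof. by move=> AB; rewrite -setI_eq0; apply/eqP/setP => x; rewrite !inE; apply/negbTE. Qed.

Lemma of_class_intro m rho sigma tau upsilon (r r' : 'I_rho -> 'I_m)
    (S T U : {set 'I_m}) (z : 'I_m -> bool) :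
  injective r -> injective r' -> #|S| = sigma -> #|T| = tau -> #|U| = upsilon ->
  partition5 [set r i | i in 'I_rho] [set r' i | i in 'I_rho] S T U ->
  of_class rho sigma tau upsilon (class_fun r r' S T z).
Proof.
move=> r_inj r'_inj cS cT cU part; exists r, r', S, T, U, z => /=.
set R := [set r i | i in 'I_rho] in part *; set R' := [set r' i | i in 'I_rho] in part *.
have cR (k : 'I_rho -> 'I_m) : injective k -> #|[set k i | i in 'I_rho]| = rho.
  by move=> k_inj; rewrite card_imset // card_ord.
have disj (A B : {set 'I_m}) :
    (forall x, (x \in R) + (x \in R') + (x \in S) + (x \in T) + (x \in U) = 1 ->
               ~~ ((x \in A) && (x \in B)))%N -> [disjoint A & B].
  by move=> AB; apply: disjoint_of => x; exact: AB (part x).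
split; first by split; rewrite ?cR.
split; first by split; apply: disj => x; rewrite ?inE;
  case: (x \in R); case: (x \in R'); case: (x \in S); case: (x \in T); case: (x \in U).
do 2 (split; first by apply: disj => x;
  case: (x \in R); case: (x \in R'); case: (x \in S); case: (x \in T); case: (x \in U)).
split => //; apply/setP => x; rewrite !inE; move: (part x).
by case: (x \in R); case: (x \in R'); case: (x \in S); case: (x \in T); case: (x \in U).
Qed.

Section Partition.
Variables (m : nat) (R R' S T U : {set 'I_m}).
Hypothesis part : partition5 R R' S T U.

Lemma partition_R x : x \in R -> [&& x \notin R', x \notin S, x \notin T & x \notin U].
Proof.
move: (part x) => + x_R; rewrite x_R.
by case: (x \in R'); case: (x \in S); case: (x \in T); case: (x \in U).
Qed.

Lemma partition_R' x : x \in R' -> [&& x \notin R, x \notin S, x \notin T & x \notin U].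
Proof.
move: (part x) => + x_R'; rewrite x_R'.
by case: (x \in R); case: (x \in S); case: (x \in T); case: (x \in U).
Qed.

Lemma partition_S x : x \in S -> [&& x \notin R, x \notin R', x \notin T & x \notin U].
Proof.
move: (part x) => + x_S; rewrite x_S.
by case: (x \in R); case: (x \in R'); case: (x \in T); case: (x \in U).
Qed.

Lemma partition_T x : x \in T -> [&& x \notin R, x \notin R', x \notin S & x \notin U].
Proof.
move: (part x) => + x_T; rewrite x_T.
by case: (x \in R); case: (x \in R'); case: (x \in S); case: (x \in U).
Qed.

Lemma partition_U x : x \in U -> [&& x \notin R, x \notin R', x \notin S & x \notin T].
Proof.
move: (part x) => + x_U; rewrite x_U.
by case: (x \in R); case: (x \in R'); case: (x \in S); case: (x \in T).
Qed.

Lemma partition_card : (#|R| + #|R'| + #|S| + #|T| + #|U| = m)%N.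
Proof.
have cardE (A : {set 'I_m}) : #|A| = (\sum_x (x \in A : nat))%N.
  by rewrite -sum1_card big_mkcond; apply: eq_bigr => x _; case: (x \in A).
rewrite !cardE -!big_split /=; under eq_bigr do rewrite part.
by rewrite sum_nat_const card_ord muln1.
Qed.

End Partition.

Lemma lift_injective m p (r : 'I_p.+1 -> 'I_m) : injective r -> injective (r \o lift ord0).
Proof. by move=> r_inj i j /r_inj /lift_inj. Qed.

Lemma imset_lift m p (r : 'I_p.+1 -> 'I_m) x : injective r ->
  (x \in [set (r \o lift ord0) i | i in 'I_p]) = (x \in [set r i | i in 'I_p.+1]) && (x != r ord0).
Proof.
move=> r_inj; apply/imsetP/andP => [[i _ ->]|[/imsetP[j _ ->] ne_j]].
  by split; [apply: imset_f | rewrite /= (inj_eq r_inj) eq_sym neq_lift].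
case: (unliftP ord0 j) ne_j => [j' ->|->]; last by rewrite eqxx.
by exists j'.
Qed.

Lemma mem_neq m (A : {set 'I_m}) x y : x \in A -> y \notin A -> x != y.
Proof. by move=> x_A; apply: contraNneq => <-. Qed.

Lemma F2_forall (P : 'F_2 -> Prop) : P 0 -> P 1 -> forall x, P x.
Proof. by move=> P0 P1 x; case: (F2_cases x) => ->. Qed.

(* Window (a, b, c) with c in U:  W_a + W_b  is replaced by  X_a X_c,
   using t(f_a) + t(f_a + f_c), where e_i, f_i is the symplectic basis. *)
Definition words_U : seq (seq lvec) :=
  [:: [:: ([:: 0; 0; 0], [:: 1; 0; 0])];
      [:: ([:: 0; 0; 0], [:: 1; 0; 1])]].
Definition pair_U (s : lstate) := s.1 0%N * s.2 0%N + s.1 1%N * s.2 1%N.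
Definition pair_U' (s : lstate) := s.1 0%N * s.1 2%N.

Lemma realizes_U : realizes 3 words_U pair_U pair_U'.
Proof.
move=> [|x0 [|x1 [|x2 []]]] // [|y0 [|y1 [|y2 []]]] // _ _.
move: x0 x1 x2 y0 y1 y2.
do 6 apply: F2_forall.
all: by apply: val_inj; vm_compute.
Qed.

(* Window (a, b, c) with c in S:  (W_a + W_b) W_c  is replaced by  W_a X_b X_c,
   using t(e_b + f_b + f_c) + t(e_b + f_c) t(f_b). *)
Definition words_S : seq (seq lvec) :=
  [:: [:: ([:: 0; 1; 0], [:: 0; 1; 1])];
      [:: ([:: 0; 1; 0], [:: 0; 0; 1]); ([:: 0; 0; 0], [:: 0; 1; 0])]].
Definition pair_S (s : lstate) :=
  (s.1 0%N * s.2 0%N + s.1 1%N * s.2 1%N) * (s.1 2%N * s.2 2%N).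
Definition pair_S' (s : lstate) := s.1 0%N * s.2 0%N * (s.1 1%N * s.1 2%N).

Lemma realizes_S : realizes 3 words_S pair_S pair_S'.
Proof.
move=> [|x0 [|x1 [|x2 []]]] // [|y0 [|y1 [|y2 []]]] // _ _.
move: x0 x1 x2 y0 y1 y2.
do 6 apply: F2_forall.
all: by apply: val_inj; vm_compute.
Qed.

Definition words_R : seq (seq lvec) :=
  [:: [:: ([:: 0; 0; 0; 0], [:: 0; 1; 0; 1])];
    [:: ([:: 0; 0; 0; 0], [:: 1; 0; 0; 0])];
    [:: ([:: 0; 0; 0; 0], [:: 1; 0; 0; 1])];
    [:: ([:: 0; 0; 0; 1], [:: 0; 1; 0; 0]); ([:: 0; 0; 0; 0], [:: 0; 0; 0; 1])];
    [:: ([:: 0; 0; 0; 1], [:: 0; 1; 0; 1])];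
    [:: ([:: 0; 0; 0; 1], [:: 1; 0; 0; 0])];
    [:: ([:: 0; 0; 0; 1], [:: 1; 0; 0; 0]); ([:: 0; 0; 0; 0], [:: 0; 0; 0; 1])];
    [:: ([:: 0; 0; 0; 1], [:: 1; 0; 0; 0]); ([:: 0; 0; 0; 0], [:: 0; 1; 0; 1])];
    [:: ([:: 0; 0; 0; 1], [:: 1; 0; 0; 1])];
    [:: ([:: 0; 0; 0; 1], [:: 1; 0; 0; 1]); ([:: 0; 0; 0; 0], [:: 0; 1; 0; 0])];
    [:: ([:: 0; 1; 0; 1], [:: 0; 0; 0; 1]); ([:: 0; 0; 0; 0], [:: 0; 1; 0; 0])];
    [:: ([:: 0; 1; 0; 1], [:: 0; 1; 0; 1])];
    [:: ([:: 1; 0; 0; 1], [:: 0; 0; 0; 1]); ([:: 0; 0; 0; 0], [:: 1; 0; 0; 0])];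
    [:: ([:: 1; 0; 0; 1], [:: 1; 0; 0; 1])]].
Definition pair_R (s : lstate) :=
  (s.1 0%N * s.2 0%N + s.1 1%N * s.2 1%N) * (s.1 2%N * s.2 2%N + s.1 3%N * s.2 3%N).
Definition pair_R' (s : lstate) :=
  s.1 0%N * s.1 1%N * (s.1 2%N * s.2 2%N + s.1 3%N * s.2 3%N).

Lemma realizes_R : realizes 4 words_R pair_R pair_R'.
Proof.
move=> [|x0 [|x1 [|x2 [|x3 []]]]] // [|y0 [|y1 [|y2 [|y3 []]]]] // _ _.
move: x0 x1 x2 x3 y0 y1 y2 y3.
do 8 apply: F2_forall.
all: by apply: val_inj; vm_compute.
Qed.

Lemma act_pair_U m p (r r' : 'I_p.+1 -> 'I_m) (S T U : {set 'I_m}) z c :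
  injective r -> injective r' ->
  partition5 [set r i | i in 'I_p.+1] [set r' i | i in 'I_p.+1] S T U -> c \in U ->
  exists a, in_group_ring a /\
    gr_act a (class_fun r r' S T z) =
    class_fun (r \o lift ord0) (r' \o lift ord0) S (r ord0 |: (c |: T))
      (fun i => (i \in T) && z i).
Proof.
move=> r_inj r'_inj part c_U.
set R := [set r i | i in 'I_p.+1] in part; set R' := [set r' i | i in 'I_p.+1] in part.
set a := r ord0; set b := r' ord0.
have a_R : a \in R by apply: imset_f.
have b_R' : b \in R' by apply: imset_f.
have /and4P[a_R' a_S a_T _] := partition_R part a_R.
have /and4P[b_R b_S b_T _] := partition_R' part b_R'.
have /and4P[c_R c_R' c_S c_T] := partition_U part c_U.
apply: (local_replacement (pl := [:: a; b; c]) a _ _ realizes_U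
          (rest := class_fun (r \o lift ord0) (r' \o lift ord0) S T z)).
- by rewrite /= !inE negb_or (mem_neq a_R b_R) (mem_neq a_R c_R) (mem_neq b_R' c_R').
- by [].
- by move=> v; rewrite class_fun_pair.
- move=> v; rewrite !class_fun_setU1T ?inE ?negb_or ?(mem_neq a_R c_R) //;
    rewrite ?(negbTE a_T) ?(negbTE c_T) //.
  by rewrite (class_fun_eq_z _ _ _ (z' := z)) => [|i ->//]; rewrite mulrA.
- move=> v w agree; apply: class_fun_agree_off agree _ _ _ _ => [i|i|i i_S|i i_T].
  + have x_R : r (lift ord0 i) \in R by apply: imset_f.
    by rewrite !inE !negb_or /= (inj_eq r_inj) eq_sym neq_lift !(mem_neq x_R).
  + have x_R' : r' (lift ord0 i) \in R' by apply: imset_f.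
    rewrite !inE !negb_or (mem_neq x_R' a_R') (mem_neq x_R' c_R').
    by rewrite (inj_eq r'_inj) eq_sym neq_lift.
  + by rewrite !inE !negb_or !(mem_neq i_S).
  + by rewrite !inE !negb_or !(mem_neq i_T).
Qed.

(* Case c in U: a moves from R to T, c from U to T, and b from R' to U. *)
Lemma class_pair_U m p (r r' : 'I_p.+1 -> 'I_m) (S T U : {set 'I_m}) z c :
  injective r -> injective r' ->
  partition5 [set r i | i in 'I_p.+1] [set r' i | i in 'I_p.+1] S T U -> c \in U ->
  of_class p #|S| #|T|.+2 #|U|
    (class_fun (r \o lift ord0) (r' \o lift ord0) S (r ord0 |: (c |: T)) z).
Proof.
move=> r_inj r'_inj part c_U.
set R := [set r i | i in 'I_p.+1] in part; set R' := [set r' i | i in 'I_p.+1] in part.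
set a := r ord0; set b := r' ord0.
have a_R : a \in R by apply: imset_f.
have b_R' : b \in R' by apply: imset_f.
have /and4P[_ _ a_T _] := partition_R part a_R.
have /and4P[_ _ _ b_U] := partition_R' part b_R'.
have /and4P[c_R _ _ c_T] := partition_U part c_U.
apply: (of_class_intro (U := b |: (U :\ c))) => //; try exact: lift_injective.
- by rewrite cardsU1 cardsU1 !inE negb_or (mem_neq a_R c_R) (negbTE a_T) c_T.
- by rewrite cardsU1 !inE (negbTE b_U) andbF (cardsD1 c U) c_U.
- move=> x; rewrite !imset_lift // !inE -/R -/R' -/a -/b.
  have x_a : (x == a) ==> (x \in R) by apply/implyP => /eqP ->.
  have x_b : (x == b) ==> (x \in R') by apply/implyP => /eqP ->.
  have x_c : (x == c) ==> (x \in U) by apply/implyP => /eqP ->.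
  move: (part x) x_a x_b x_c.
  by case: (x \in R); case: (x \in R'); case: (x \in S); case: (x \in T); case: (x \in U);
     case: (x == a); case: (x == b); case: (x == c).
Qed.

Lemma act_pair_S m p (r r' : 'I_p.+1 -> 'I_m) (S T U : {set 'I_m}) z c :
  injective r -> injective r' ->
  partition5 [set r i | i in 'I_p.+1] [set r' i | i in 'I_p.+1] S T U -> c \in S ->
  exists a, in_group_ring a /\
    gr_act a (class_fun r r' S T z) =
    class_fun (r \o lift ord0) (r' \o lift ord0) (r ord0 |: (S :\ c)) (r' ord0 |: (c |: T))
      (fun i => (i \in T) && z i).
Proof.
move=> r_inj r'_inj part c_S.
set R := [set r i | i in 'I_p.+1] in part; set R' := [set r' i | i in 'I_p.+1] in part.
set a := r ord0; set b := r' ord0.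
have a_R : a \in R by apply: imset_f.
have b_R' : b \in R' by apply: imset_f.
have /and4P[a_R' a_S a_T _] := partition_R part a_R.
have /and4P[b_R b_S b_T _] := partition_R' part b_R'.
have /and4P[c_R c_R' c_T _] := partition_S part c_S.
have c_Sc : c \notin S :\ c by rewrite !inE eqxx.
apply: (local_replacement (pl := [:: a; b; c]) a _ _ realizes_S
          (rest := class_fun (r \o lift ord0) (r' \o lift ord0) (S :\ c) T z)).
- by rewrite /= !inE negb_or (mem_neq a_R b_R) (mem_neq a_R c_R) (mem_neq b_R' c_R').
- by [].
- by move=> v; rewrite -{1}(setD1K c_S) class_fun_pair class_fun_setU1S // mulrA.
- move=> v; rewrite class_fun_setU1S ?inE ?negb_or ?(negbTE a_S) ?andbF //.
  rewrite !class_fun_setU1T ?inE ?negb_or ?(mem_neq b_R' c_R') ?(negbTE b_T) ?(negbTE c_T) //.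
  by rewrite (class_fun_eq_z _ _ _ (z' := z)) => [|i ->//]; rewrite /pair_S' /= !mulrA.
- move=> v w agree; apply: class_fun_agree_off agree _ _ _ _ => [i|i|i|i i_T].
  + have x_R : r (lift ord0 i) \in R by apply: imset_f.
    by rewrite !inE !negb_or /= (inj_eq r_inj) eq_sym neq_lift !(mem_neq x_R).
  + have x_R' : r' (lift ord0 i) \in R' by apply: imset_f.
    rewrite !inE !negb_or (mem_neq x_R' a_R') (mem_neq x_R' c_R').
    by rewrite (inj_eq r'_inj) eq_sym neq_lift.
  + rewrite !inE => /andP[i_c i_S].
    by rewrite !negb_or i_c !(mem_neq i_S).
  + by rewrite !inE !negb_or !(mem_neq i_T).
Qed.

Lemma class_pair_S m p (r r' : 'I_p.+1 -> 'I_m) (S T U : {set 'I_m}) z c :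
  injective r -> injective r' ->
  partition5 [set r i | i in 'I_p.+1] [set r' i | i in 'I_p.+1] S T U -> c \in S ->
  of_class p #|S| #|T|.+2 #|U|
    (class_fun (r \o lift ord0) (r' \o lift ord0) (r ord0 |: (S :\ c)) (r' ord0 |: (c |: T)) z).
Proof.
move=> r_inj r'_inj part c_S.
set R := [set r i | i in 'I_p.+1] in part; set R' := [set r' i | i in 'I_p.+1] in part.
set a := r ord0; set b := r' ord0.
have a_R : a \in R by apply: imset_f.
have b_R' : b \in R' by apply: imset_f.
have /and4P[_ a_S _ _] := partition_R part a_R.
have /and4P[_ _ b_T _] := partition_R' part b_R'.
have /and4P[_ c_R' c_T _] := partition_S part c_S.
apply: (of_class_intro (U := U)) => //; try exact: lift_injective.
- by rewrite cardsU1 !inE (negbTE a_S) andbF (cardsD1 c S) c_S.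
- by rewrite cardsU1 cardsU1 !inE negb_or (mem_neq b_R' c_R') (negbTE b_T) c_T.
- move=> x; rewrite !imset_lift // !inE -/R -/R' -/a -/b.
  have x_a : (x == a) ==> (x \in R) by apply/implyP => /eqP ->.
  have x_b : (x == b) ==> (x \in R') by apply/implyP => /eqP ->.
  have x_c : (x == c) ==> (x \in S) by apply/implyP => /eqP ->.
  move: (part x) x_a x_b x_c.
  by case: (x \in R); case: (x \in R'); case: (x \in S); case: (x \in T); case: (x \in U);
     case: (x == a); case: (x == b); case: (x == c).
Qed.

Lemma act_pair_R m p (r r' : 'I_p.+2 -> 'I_m) (S T U : {set 'I_m}) z :
  injective r -> injective r' ->
  partition5 [set r i | i in 'I_p.+2] [set r' i | i in 'I_p.+2] S T U ->
  exists a, in_group_ring a /\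
    gr_act a (class_fun r r' S T z) =
    class_fun (r \o lift ord0) (r' \o lift ord0) S (r ord0 |: (r' ord0 |: T))
      (fun i => (i \in T) && z i).
Proof.
move=> r_inj r'_inj part.
set R := [set r i | i in 'I_p.+2] in part; set R' := [set r' i | i in 'I_p.+2] in part.
set a := r ord0; set b := r' ord0; set c := r (lift ord0 ord0); set d := r' (lift ord0 ord0).
have [a_R c_R] : a \in R /\ c \in R by split; apply: imset_f.
have [b_R' d_R'] : b \in R' /\ d \in R' by split; apply: imset_f.
have /and4P[a_R' a_S a_T _] := partition_R part a_R.
have /and4P[b_R b_S b_T _] := partition_R' part b_R'.
have /and4P[c_R' c_S c_T _] := partition_R part c_R.
have /and4P[d_R d_S d_T _] := partition_R' part d_R'.
apply: (local_replacement (pl := [:: a; b; c; d]) a _ _ realizes_R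
  (rest := class_fun (r \o lift ord0 \o lift ord0) (r' \o lift ord0 \o lift ord0) S T z)).
- rewrite /= !inE !negb_or (mem_neq a_R b_R) (mem_neq a_R d_R) (mem_neq b_R' c_R').
  by rewrite (mem_neq c_R d_R) (inj_eq r_inj) (inj_eq r'_inj) !neq_lift.
- by [].
- by move=> v; rewrite !class_fun_pair mulrA.
- move=> v; rewrite !class_fun_setU1T ?inE ?negb_or ?(mem_neq a_R b_R) //;
    rewrite ?(negbTE a_T) ?(negbTE b_T) //.
  by rewrite (class_fun_eq_z _ _ _ (z' := z)) => [|i ->//]; rewrite class_fun_pair !mulrA.
- move=> v w agree; apply: class_fun_agree_off agree _ _ _ _ => [i|i|i i_S|i i_T].
  + have x_R : r (lift ord0 (lift ord0 i)) \in R by apply: imset_f.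
    rewrite !inE !negb_or (mem_neq x_R b_R) (mem_neq x_R d_R).
    by rewrite !(inj_eq r_inj) (inj_eq lift_inj) !(eq_sym (lift _ _)) !neq_lift.
  + have x_R' : r' (lift ord0 (lift ord0 i)) \in R' by apply: imset_f.
    rewrite !inE !negb_or (mem_neq x_R' a_R') (mem_neq x_R' c_R').
    by rewrite !(inj_eq r'_inj) (inj_eq lift_inj) !(eq_sym (lift _ _)) !neq_lift.
  + by rewrite !inE !negb_or !(mem_neq i_S).
  + by rewrite !inE !negb_or !(mem_neq i_T).
Qed.

Lemma class_pair_R m p (r r' : 'I_p.+2 -> 'I_m) (S T U : {set 'I_m}) z :
  injective r -> injective r' ->
  partition5 [set r i | i in 'I_p.+2] [set r' i | i in 'I_p.+2] S T U ->
  of_class p.+1 #|S| #|T|.+2 #|U|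
    (class_fun (r \o lift ord0) (r' \o lift ord0) S (r ord0 |: (r' ord0 |: T)) z).
Proof.
move=> r_inj r'_inj part.
set R := [set r i | i in 'I_p.+2] in part; set R' := [set r' i | i in 'I_p.+2] in part.
set a := r ord0; set b := r' ord0.
have a_R : a \in R by apply: imset_f.
have b_R' : b \in R' by apply: imset_f.
have /and4P[_ _ a_T _] := partition_R part a_R.
have /and4P[b_R _ b_T _] := partition_R' part b_R'.
apply: (of_class_intro (U := U)) => //; try exact: lift_injective.
- by rewrite cardsU1 cardsU1 !inE negb_or (mem_neq a_R b_R) (negbTE a_T) b_T.
- move=> x; rewrite !imset_lift // !inE -/R -/R' -/a -/b.
  have x_a : (x == a) ==> (x \in R) by apply/implyP => /eqP ->.
  have x_b : (x == b) ==> (x \in R') by apply/implyP => /eqP ->.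
  move: (part x) x_a x_b.
  by case: (x \in R); case: (x \in R'); case: (x \in S); case: (x \in T); case: (x \in U);
     case: (x == a); case: (x == b).
Qed.

(* Lemma 6.3: pick a case according to the partition; the only class where
   none applies is the excluded one. *)
Theorem lemma6p3 (m : nat) (Bf : nat -> nat -> {set Fn m})
    (rho sigma tau upsilon : nat) (f : Fn m) :
  valid_B Bf ->
  symp_basis_fun Bf f ->
  of_class rho sigma tau upsilon f ->
  ~ [/\ rho = 1%N, sigma = 0%N, tau = (m - 2)%N & upsilon = 0%N] ->
  (0 < rho)%N ->
  exists a : 'M['F_2]_(m + m) -> 'F_2,
    in_group_ring a /\ of_class rho.-1 sigma tau.+2 upsilon (gr_act a f).
Proof.
move=> _ _ /of_class_elim [r [r' [S [T [U [z [[r_inj r'_inj <- <- <-] [part ->]]]]]]]].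
case: rho r r' r_inj r'_inj part => // p r r' r_inj r'_inj part not_excluded _.
have [U0 | [c c_U]] := set_0Vmem U; last first.
  have [a [a_ring a_f]] := act_pair_U z r_inj r'_inj part c_U.
  by exists a; rewrite a_f; split => //; apply: class_pair_U.
have [S0 | [c c_S]] := set_0Vmem S; last first.
  have [a [a_ring a_f]] := act_pair_S z r_inj r'_inj part c_S.
  by exists a; rewrite a_f; split => //; apply: class_pair_S.
case: p r r' r_inj r'_inj part not_excluded => [|p] r r' r_inj r'_inj part not_excluded.
  (* rho = 1, sigma = upsilon = 0 forces tau = m - 2: the excluded class. *)
  exfalso; apply: not_excluded; rewrite S0 U0 cards0; split => //.
  by have := partition_card part; rewrite !card_imset // card_ord S0 U0 cards0; lia.
have [a [a_ring a_f]] := act_pair_R z r_inj r'_inj part.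
by exists a; rewrite a_f; split => //; apply: class_pair_R.
Qed.
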